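(* Let $0<\eta<1$, $I=[\eta,1]$, and $\mathcal{D}$ as in the context. For every $1\le p\le\infty$ there are constants $C,C_6>0$ independent of $n$ such that $\varepsilon_n(B_1(\mathcal{D}))_{L^p(I)}\le Ce^{-C_6n^{1/2}}$ for all $n\ge1$.
   Context: Dictionary: for $b\in(0,\infty)$ let $g(x,b)=\frac{\eta+b}{x+b}$ on $I$, and $\mathcal{D}=\{g(\cdot,b):b\in(0,\infty)\}$. $B_1(\mathcal{D})$ is the closure in $L^p(I)$ of $\{\sum_{j=1}^m c_jg_j: m\in\mathbb{N}, g_j\in\mathcal{D}, \sum_j|c_j|\le1\}$. Entropy numbers: $\varepsilon_n(F)_X=\inf\{\varepsilon>0: F\text{ is covered by }2^n\text{ balls of radius }\varepsilon\text{ in }X\}$. *)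

From HB Require Import structures.
From mathcomp Require Import all_boot all_order all_algebra.
From mathcomp Require Import all_classical all_reals all_analysis.
Set Implicit Arguments. Unset Strict Implicit. Unset Printing Implicit Defensive.
Import Order.TTheory GRing.Theory Num.Theory.
Import numFieldNormedType.Exports.
Local Open Scope classical_set_scope.
Local Open Scope ring_scope.

Definition Iset {R : realType} (eta : R) : set R := `[eta, 1%R].

Definition LpI_dist {R : realType} (p : \bar R) (eta : R) (f g : R -> R) : \bar R :=
  Lnorm (@lebesgue_measure R) p (fun x => ((f x - g x) * \1_(Iset eta) x)%:E).

Definition LpI {R : realType} (p : \bar R) (eta : R) : set (R -> R) :=
  [set f | measurable_fun (Iset eta) f /\
           (LpI_dist p eta f (fun _ => 0%R) < +oo)%E].

Definition gdict {R : realType} (eta : R) (b x : R) : R := (eta + b) / (x + b).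

Definition absconv_dict {R : realType} (eta : R) : set (R -> R) :=
  [set f | exists (m : nat) (c b : 'I_m -> R),
     (forall j, 0 < b j) /\ \sum_(j < m) `|c j| <= 1 /\
     f = (fun x => \sum_(j < m) c j * gdict eta (b j) x)].

Definition LpI_closure {R : realType} (p : \bar R) (eta : R) (S : set (R -> R))
  : set (R -> R) :=
  [set f | f \in LpI p eta /\
     forall e : R, 0 < e -> exists2 h, S h & (LpI_dist p eta f h < e%:E)%E].

Definition B1D {R : realType} (p : \bar R) (eta : R) : set (R -> R) :=
  LpI_closure p eta (absconv_dict eta).

Definition covered_by {R : realType} (p : \bar R) (eta : R) (F : set (R -> R))
  (n : nat) (e : R) : Prop :=
  exists c : 'I_(2 ^ n) -> (R -> R),
    (forall i, c i \in LpI p eta) /\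
    forall f, F f -> exists i, (LpI_dist p eta f (c i) <= e%:E)%E.

Definition entropy_number {R : realType} (p : \bar R) (eta : R)
  (F : set (R -> R)) (n : nat) : \bar R :=
  ereal_inf [set e%:E | e in [set e : R | 0 < e /\ covered_by p eta F n e]].

From Pilot Require Import Defs.
From HB Require Import structures.
From mathcomp Require Import all_boot all_order all_algebra.
From mathcomp Require Import all_classical all_reals all_analysis.
From mathcomp Require Import ring lra zify measurable_realfun ess_sup_inf.
Import Order.TTheory GRing.Theory Num.Theory.
Import numFieldNormedType.Exports.
Local Open Scope classical_set_scope.
Local Open Scope ring_scope.

(* Map I affinely onto [-1, 1] by t = (x - m) / r, with m = (1 + eta) / 2 and
   r = (1 - eta) / 2. Each g(., b) is (eta + b) / (m + b) times a geometric
   series in t whose ratio has modulus at most q = (1 - eta) / (1 + eta) < 1 on I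
   and whose coefficients have modulus at most 1. Truncating after K terms thus
   approximates every element of the absolutely convex hull of D, uniformly on I,
   within q^K / (1 - q) by a polynomial in t with coefficients in [-1, 1];
   rounding these coefficients to a grid of B points costs 2K / B more. As I has
   measure at most 1, sup norms on I dominate L^p(I) norms, so the B^K grid
   polynomials are the centres of a cover of B_1(D). With K = s, B = 4^s and
   2 s^2 <= n < 2 (s + 1)^2 there are at most 2^n of them, and the radius is
   O(((1 + q) / 2)^s) = O(exp(-c sqrt n)). *)

Section LpI_sup_bounds.
Context {R : realType} {eta : R} {p : \bar R}.
Hypotheses (eta_gt0 : 0 < eta) (eta_lt1 : eta < 1) (p_ge1 : (1%:E <= p)%E).

Lemma measurable_Iset : measurable (Iset eta).
Proof. exact: measurable_itv. Qed.

Lemma measurable_mul_indic_Iset (F : R -> R) :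
  measurable_fun (Iset eta) F ->
  measurable_fun setT (fun x => F x * \1_(Iset eta) x).
Proof.
move=> mF; have := (measurable_restrictT F measurable_Iset).1 mF.
apply: eq_measurable_fun => x _.
by rewrite /patch /indic; case: (x \in Iset eta); rewrite ?mulr1 ?mulr0.
Qed.

Lemma integral_poweR_abse_le (u : R -> R) (M r : R) :
  0 < r -> 0 <= M -> measurable_fun setT u ->
  (forall x, `|u x| <= M * \1_(Iset eta) x) ->
  (\int[lebesgue_measure]_x (`|(u x)%:E| `^ r) <= (M `^ r)%:E)%E.
Proof.
move=> r0 M0 mu ub.
apply: (@le_trans _ _ (\int[lebesgue_measure]_x ((M `^ r) * \1_(Iset eta) x)%:E)%E).
  apply: ge0_le_integral => //.
  - by move=> x _; exact: poweR_ge0.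
  - apply: (@measurableT_comp _ _ _ _ _ _ (poweR ^~ r)%E _ (abse \o (EFin \o u))%E).
      exact: measurable_poweR.
    by apply: measurableT_comp => //; apply/measurable_EFinP.
  - by apply/measurable_EFinP; apply: measurable_funM => //;
      apply: measurable_indic; exact: measurable_Iset.
  - move=> x _; rewrite abse_EFin poweR_EFin lee_fin.
    move: (ub x); rewrite /indic; case: (boolP (x \in Iset eta)) => _.
      by rewrite !mulr1 => ux; apply: (ge0_ler_powR (ltW r0)); rewrite ?nnegrE.
    by rewrite !mulr0 normr_le0 => /eqP ->; rewrite normr0 powR0 ?gt_eqF.
rewrite (@integralZl_indic _ _ _ lebesgue_measure setT measurableT
  (fun _ => Iset eta) (M `^ r)); last 2 first.
- by move=> k; have := powR_ge0 M r; rewrite leNgt k.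
- exact: measurable_Iset.
rewrite integral_indic ?setIT; [|exact: measurableT|exact: measurable_Iset].
rewrite [X in (_ * X <= _)%E](_ : _ = (1 - eta)%:E); last first.
  by have := lebesgue_measure_itv `[eta, 1%R]; rewrite /= lte_fin eta_lt1 -EFinB.
by rewrite -EFinM lee_fin ler_piMr ?powR_ge0 // lerBlDr lerDl ltW.
Qed.

Lemma LpI_dist_le_sup (f g : R -> R) (M : R) :
  0 <= M -> measurable_fun (Iset eta) (f \- g) ->
  (forall x, Iset eta x -> `|f x - g x| <= M) ->
  (LpI_dist p eta f g <= M%:E)%E.
Proof.
move=> M0 /measurable_mul_indic_Iset mu hb.
set u := fun x => (f x - g x) * \1_(Iset eta) x.
have ub x : `|u x| <= M * \1_(Iset eta) x.
  rewrite /u /indic; case: (boolP (x \in Iset eta)) => [|_].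
    by rewrite inE => xI; rewrite !mulr1 hb.
  by rewrite !mulr0 normr0.
rewrite /LpI_dist unlock; case: p p_ge1 => [r|_|//]; last first.
  case: ifPn => // _; apply/ess_supP; apply: nearW => x /=.
  by rewrite lee_fin (le_trans (ub x)) // /indic; case: (_ \in _); rewrite ?mulr1 ?mulr0.
rewrite lee_fin => r1; have r0 : 0 < r by apply: lt_le_trans r1.
apply: (@le_trans _ _ ((M `^ r)%:E `^ r^-1)%E).
  apply: gt0_ler_poweR => //; first by rewrite invr_ge0 ltW.
  - by rewrite in_itv /= integral_ge0 //= ?leey // => x _; exact: poweR_ge0.
  - by rewrite in_itv /= lee_fin powR_ge0 leey.
  - exact: integral_poweR_abse_le.
by rewrite poweR_EFin -powRrM mulfV ?gt_eqF // powRr1.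
Qed.

Lemma LpI_dist_triangle {f g h : R -> R} :
  measurable_fun (Iset eta) (f \- h) -> measurable_fun (Iset eta) (h \- g) ->
  (LpI_dist p eta f g <= LpI_dist p eta f h + LpI_dist p eta h g)%E.
Proof.
move=> /measurable_mul_indic_Iset mfh /measurable_mul_indic_Iset mhg.
have -> : LpI_dist p eta f g = Lnorm lebesgue_measure p (EFin \o
    ((fun x => (f x - h x) * \1_(Iset eta) x) \+
     (fun x => (h x - g x) * \1_(Iset eta) x))).
  by apply: eq_Lnorm => x /=; congr EFin; ring.
exact: eminkowski.
Qed.

End LpI_sup_bounds.

Section Taylor.
Context {R : realType} (eta : R).
Hypotheses (eta_gt0 : 0 < eta) (eta_lt1 : eta < 1).

Definition Imid : R := (1 + eta) / 2.
Definition Irad : R := (1 - eta) / 2.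
Definition Iratio : R := (1 - eta) / (1 + eta).
Definition Iscale (x : R) : R := (x - Imid) / Irad.
Definition gdict_coef (b : R) (k : nat) : R :=
  (eta + b) / (Imid + b) * (- (Irad / (Imid + b))) ^+ k.

(* [lra] does not see section hypotheses, hence the local copies [e0] and [e1]. *)
Let Imid_gt0 : 0 < Imid. Proof. have e0 := eta_gt0; rewrite /Imid; lra. Qed.
Let Irad_gt0 : 0 < Irad. Proof. have e1 := eta_lt1; rewrite /Irad; lra. Qed.

Lemma Iratio_gt0 : 0 < Iratio.
Proof. have e0 := eta_gt0; have e1 := eta_lt1; rewrite /Iratio divr_gt0 //; lra. Qed.
Lemma Iratio_lt1 : Iratio < 1.
Proof. have e0 := eta_gt0; rewrite /Iratio ltr_pdivrMr ?mul1r; lra. Qed.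

Lemma dist_Imid_le x : Iset eta x -> `|x - Imid| <= Irad.
Proof.
rewrite /Iset /= in_itv /= => /andP[x1 x2]; rewrite /Irad /Imid ler_norml; lra.
Qed.

Lemma Iscale_le1 x : Iset eta x -> `|Iscale x| <= 1.
Proof.
move=> /dist_Imid_le xI.
by rewrite /Iscale normrM normfV (gtr0_norm Irad_gt0) ler_pdivrMr // mul1r.
Qed.

Lemma gdict_coef_le1 b k : 0 < b -> `|gdict_coef b k| <= 1.
Proof.
move=> b0; have e0 := eta_gt0; have e1 := eta_lt1.
rewrite /gdict_coef normrM normrX normrN -[1]mul1r.
apply: ler_pM => //.
  by rewrite ger0_norm ?ler_pdivrMr ?divr_ge0 /Imid; lra.
by apply: exprn_ile1 => //; rewrite ger0_norm ?ler_pdivrMr ?divr_ge0 /Imid /Irad; lra.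
Qed.

(* With w = (x - Imid) / (Imid + b) one has g(x, b) = (eta + b) / (Imid + b) / (1 + w),
   and the sum is the geometric series of 1 / (1 + w) truncated after K terms. *)
Lemma gdict_taylor_remainder b x K : 0 < b -> Iset eta x ->
  gdict eta b x - \sum_(k < K) gdict_coef b k * Iscale x ^+ k
    = (eta + b) / (Imid + b) * (- ((x - Imid) / (Imid + b))) ^+ K
      / (1 + (x - Imid) / (Imid + b)).
Proof.
move=> b0; rewrite /Iset /= in_itv /= => /andP[x1 x2].
have e0 := eta_gt0; have e1 := eta_lt1; have m0 := Imid_gt0; have r0 := Irad_gt0.
set w := (x - Imid) / (Imid + b).
have w1 : 1 + w != 0.
  have -> : 1 + w = (x + b) / (Imid + b) by rewrite /w; field; lra.
  by rewrite gt_eqF // divr_gt0 //; lra.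
have -> : \sum_(k < K) gdict_coef b k * Iscale x ^+ k
    = (eta + b) / (Imid + b) * \sum_(k < K) (- w) ^+ k.
  rewrite mulr_sumr; apply: eq_bigr => k _.
  rewrite /gdict_coef /Iscale -mulrA -exprMn; congr (_ * _ ^+ _).
  by rewrite /w; field; lra.
have geom : \sum_(k < K) (- w) ^+ k = (1 - (- w) ^+ K) / (1 + w).
  apply: (mulIf w1); rewrite mulfVK //.
  have := subrX1 (- w) K; rewrite mulrC => telescope.
  by rewrite (_ : 1 + w = - (- w - 1)) ?mulrN -?telescope; ring.
rewrite geom /gdict; apply: (mulIf w1); rewrite mulrBl !mulfVK //.
by rewrite /w; field; lra.
Qed.

Lemma gdict_taylor b x K : 0 < b -> Iset eta x ->
  `|gdict eta b x - \sum_(k < K) gdict_coef b k * Iscale x ^+ k|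
    <= Iratio ^+ K / (1 - Iratio).
Proof.
move=> b0 xI; rewrite gdict_taylor_remainder //.
have e0 := eta_gt0; have e1 := eta_lt1; have m0 := Imid_gt0.
have q0 := Iratio_gt0; have q1 := Iratio_lt1.
set w := (x - Imid) / (Imid + b).
have wq : `|w| <= Iratio.
  rewrite /w normrM normfV (@gtr0_norm _ (Imid + b)) ?ler_pdivrMr; try lra.
  have -> : Iratio * (Imid + b) = Irad + Iratio * b.
    by rewrite /Iratio /Imid /Irad; field; lra.
  by have := dist_Imid_le _ xI; nra.
have w1 : 1 - Iratio <= 1 + w by move: wq; rewrite ler_norml => /andP[wl _]; lra.
have A1 : `|(eta + b) / (Imid + b)| <= 1.
  by rewrite ger0_norm ?ler_pdivrMr ?divr_ge0 /Imid; lra.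
have wK : `|w| ^+ K <= Iratio ^+ K by apply: lerXn2r; rewrite ?nnegrE // ltW.
have w1V : (1 + w)^-1 <= (1 - Iratio)^-1 by rewrite lef_pV2 ?posrE; lra.
rewrite normrM normfV normrM normrX normrN (@gtr0_norm _ (1 + w)); last lra.
rewrite -[Iratio ^+ K]mul1r.
apply: ler_pM; rewrite ?mulr_ge0 ?invr_ge0 //; try lra.
exact: ler_pM.
Qed.

Lemma absconv_dict_poly_approx K h : absconv_dict eta h ->
  exists beta : 'I_K -> R, (forall k, `|beta k| <= 1) /\
    forall x, Iset eta x ->
      `|h x - \sum_(k < K) beta k * Iscale x ^+ k| <= Iratio ^+ K / (1 - Iratio).
Proof.
case=> m [c [b [b_gt0 [c_le1 ->]]]].
exists (fun k => \sum_(j < m) c j * gdict_coef (b j) k); split.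
  move=> k; apply: le_trans (ler_norm_sum _ _ _) (le_trans _ c_le1).
  apply: ler_sum => j _; rewrite normrM -[X in _ <= X]mulr1.
  by apply: ler_wpM2l => //; exact: gdict_coef_le1.
move=> x xI.
have -> : \sum_(k < K) (\sum_(j < m) c j * gdict_coef (b j) k) * Iscale x ^+ k =
    \sum_(j < m) c j * \sum_(k < K) gdict_coef (b j) k * Iscale x ^+ k.
  under eq_bigr do rewrite big_distrl /=.
  rewrite exchange_big /=; apply: eq_bigr => j _.
  by rewrite mulr_sumr; apply: eq_bigr => k _; rewrite mulrA.
rewrite -sumrB; under eq_bigr do rewrite -mulrBr.
apply: le_trans (ler_norm_sum _ _ _) _.
apply: (@le_trans _ _ (\sum_(j < m) `|c j| * (Iratio ^+ K / (1 - Iratio)))).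
  by apply: ler_sum => j _; rewrite normrM ler_wpM2l // gdict_taylor.
rewrite -big_distrl /= -[X in _ <= X]mul1r ler_wpM2r //.
by rewrite divr_ge0 ?exprn_ge0 ?subr_ge0 ?ltW ?Iratio_gt0 ?Iratio_lt1.
Qed.

End Taylor.

Definition grid_point {R : realType} (B d : nat) : R := -1 + 2 * d%:R / B%:R.

Lemma grid_point_le1 {R : realType} B (d : 'I_B) : `|grid_point B d : R| <= 1.
Proof.
have B0 : 0 < (B%:R : R) by rewrite ltr0n (leq_ltn_trans _ (ltn_ord d)).
have dB : 2 * d%:R / (B%:R : R) <= 2.
  by rewrite ler_pdivrMr // ler_pM2l // ler_nat ltnW.
have d0 : 0 <= 2 * d%:R / (B%:R : R) by rewrite divr_ge0 ?mulr_ge0.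
by rewrite /grid_point ler_norml; apply/andP; split; lra.
Qed.

(* Round (beta + 1) B / 2 down, keeping the index below B. *)
Lemma exists_grid_point_near {R : realType} {B : nat} {beta : R} :
  (0 < B)%N -> `|beta| <= 1 -> exists d : 'I_B, `|beta - grid_point B d| <= 2 / B%:R.
Proof.
move=> B0; rewrite ler_norml => /andP[beta_ge beta_le].
have hB : 0 < (B%:R : R) by rewrite ltr0n.
set y := (beta + 1) * B%:R / 2.
have y0 : 0 <= y by rewrite /y divr_ge0 // mulr_ge0 //; lra.
have yB : y <= B%:R by rewrite /y ler_pdivrMr // mulrC ler_wpM2l //; lra.
have /andP[ny yn] := truncn_itv y0; set n := Num.truncn y in ny yn.
have d_lt : (minn n B.-1 < B)%N by lia.
exists (Ordinal d_lt) => /=.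
have /andP[d_le d_ge] : 0 <= y - (minn n B.-1)%:R <= 1.
  case: (leqP n B.-1) => nB.
    by apply/andP; split; move: yn; rewrite -natr1; lra.
  have B1 : (B.-1%:R : R) + 1 = B%:R by rewrite natr1 prednK.
  have Bn : (B.-1%:R : R) <= n%:R by rewrite ler_nat ltnW.
  by apply/andP; split; lra.
have -> : beta - grid_point B (minn n B.-1) = 2 * (y - (minn n B.-1)%:R) / B%:R.
  by rewrite /grid_point /y; field; rewrite gt_eqF.
rewrite normrM normfV (gtr0_norm hB) ler_pdivrMr // divfK ?gt_eqF //.
by rewrite ger0_norm ?mulr_ge0 //; lra.
Qed.

(* g(., b) is nonincreasing on I; extend it to R by freezing its value left of I. *)
Lemma measurable_gdict {R : realType} (eta b : R) : 0 < eta -> 0 < b ->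
  measurable_fun (Iset eta) (gdict eta b).
Proof.
move=> eta_gt0 b_gt0.
apply: (@eq_measurable_fun _ _ _ _ (Iset eta) (fun x => (eta + b) / (Num.max x eta + b))).
  move=> x; rewrite inE /Iset /= in_itv /= => /andP[x_ge _].
  by rewrite /gdict max_l.
apply: nonincreasing_measurable; first exact: measurable_Iset.
move=> s t st; have max_pos z : 0 < Num.max z eta + b.
  by apply: (@lt_le_trans _ _ (eta + b)); rewrite ?lerD2r ?le_max ?lexx ?orbT //; lra.
apply: ler_wpM2l; first lra.
by rewrite lef_pV2 ?posrE // lerD2r le_max2.
Qed.

Lemma measurable_absconv_dict {R : realType} {eta : R} {h} : 0 < eta ->
  absconv_dict eta h -> measurable_fun (Iset eta) h.
Proof.
move=> eta_gt0 [m [c [b [b_gt0 [_ ->]]]]].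
apply: measurable_sum => j; apply: measurable_funM; first exact: measurable_cst.
exact: measurable_gdict.
Qed.

Lemma entropy_number_le {R : realType} (p : \bar R) eta F n (e : R) :
  0 < e -> Defs.covered_by p eta F n e -> (entropy_number p eta F n <= e%:E)%E.
Proof. by move=> e_gt0 Fe; apply: ereal_inf_lbound; exists e. Qed.

Section GridCover.
Context {R : realType} (eta : R) (p : \bar R).
Hypotheses (eta_gt0 : 0 < eta) (eta_lt1 : eta < 1) (p_ge1 : (1%:E <= p)%E).

Definition grid_poly {K B : nat} (e : {ffun 'I_K -> 'I_B}) (x : R) : R :=
  \sum_(k < K) grid_point B (e k) * Iscale eta x ^+ k.

Lemma measurable_grid_poly {K B} (e : {ffun 'I_K -> 'I_B}) :
  measurable_fun setT (grid_poly e).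
Proof.
apply: measurable_sum => k; apply: measurable_funM; first exact: measurable_cst.
apply/measurable_funX/measurable_funM; last exact: measurable_cst.
by apply: measurable_funB => //; exact: measurable_cst.
Qed.

Lemma grid_poly_le {K B} (e : {ffun 'I_K -> 'I_B}) x :
  Iset eta x -> `|grid_poly e x| <= K%:R.
Proof.
move=> xI; apply: le_trans (ler_norm_sum _ _ _) _.
apply: le_trans (_ : _ <= \sum_(k < K) 1) _; last by rewrite sumr_const card_ord.
apply: ler_sum => k _.
rewrite normrM normrX -[1]mul1r ler_pM ?grid_point_le1 //.
by rewrite exprn_ile1 ?Iscale_le1.
Qed.

Lemma grid_poly_in_LpI {K B} (e : {ffun 'I_K -> 'I_B}) : grid_poly e \in LpI p eta.
Proof.
rewrite inE; split; first exact: (measurable_funTS (measurable_grid_poly _)).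
apply: le_lt_trans (ltry K%:R); apply: LpI_dist_le_sup => //.
  by apply: measurable_funB; [exact: (measurable_funTS (measurable_grid_poly _))|].
by move=> x xI; rewrite subr0 grid_poly_le.
Qed.

Lemma absconv_dict_grid_approx K {B h} : (0 < B)%N -> absconv_dict eta h ->
  exists e : {ffun 'I_K -> 'I_B}, forall x, Iset eta x ->
    `|h x - grid_poly e x| <= Iratio eta ^+ K / (1 - Iratio eta) + K%:R * (2 / B%:R).
Proof.
move=> B0 /(absconv_dict_poly_approx _ eta_gt0 eta_lt1 K) [beta [beta_le1 h_beta]].
have [d d_near] := fin_all_exists (fun k => exists_grid_point_near B0 (beta_le1 k)).
exists [ffun k => d k] => x xI.
have -> : h x - grid_poly [ffun k => d k] x = (h x - \sum_(k < K) beta k * Iscale eta x ^+ k)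
    + \sum_(k < K) (beta k - grid_point B (d k)) * Iscale eta x ^+ k.
  rewrite /grid_poly (eq_bigr _ (fun k _ => mulrBl _ _ _)) sumrB.
  by under eq_bigr do rewrite ffunE; ring.
apply: le_trans (ler_normD _ _) (lerD (h_beta x xI) _).
apply: le_trans (ler_norm_sum _ _ _) _.
apply: le_trans (_ : _ <= \sum_(k < K) 2 / B%:R) _; last first.
  by rewrite sumr_const card_ord [X in _ <= X]mulr_natl.
apply: ler_sum => k _.
rewrite normrM normrX -[X in _ <= X]mulr1 ler_pM ?d_near //.
by rewrite exprn_ile1 ?Iscale_le1.
Qed.

Lemma grid_radius_gt0 K {B} : (0 < B)%N ->
  0 < Iratio eta ^+ K / (1 - Iratio eta) + K%:R * (2 / B%:R).
Proof.
have q0 := Iratio_gt0 _ eta_gt0 eta_lt1; have q1 := Iratio_lt1 _ eta_gt0.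
move=> B0; have : 0 <= K%:R * (2 / (B%:R : R)) by rewrite mulr_ge0 ?divr_ge0.
have : 0 < Iratio eta ^+ K / (1 - Iratio eta) by rewrite divr_gt0 ?exprn_gt0 ?subr_gt0.
lra.
Qed.

Lemma covered_B1D K B n : (0 < B)%N -> (B ^ K <= 2 ^ n)%N ->
  Defs.covered_by p eta (B1D p eta) n
    (2 * (Iratio eta ^+ K / (1 - Iratio eta) + K%:R * (2 / B%:R))).
Proof.
move=> B0 BK.
have delta_gt0 := grid_radius_gt0 K B0; set delta := _ + _ in delta_gt0 *.
pose T := {ffun 'I_K -> 'I_B}.
have card_T : (#|T| <= 2 ^ n)%N by rewrite card_ffun !card_ord.
pose e0 : T := [ffun=> Ordinal B0].
exists (fun i => grid_poly (nth e0 (enum T) i)).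
split=> [i|f [fL f_close]]; first exact: grid_poly_in_LpI.
have [h h_dict fh] := f_close delta delta_gt0.
have [e he] := absconv_dict_grid_approx K B0 h_dict.
exists (widen_ord card_T (enum_rank e)); rewrite /= nth_enum_rank.
have mh := measurable_absconv_dict eta_gt0 h_dict.
have mf : measurable_fun (Iset eta) f by move: fL; rewrite inE => -[].
have me : measurable_fun (Iset eta) (grid_poly e).
  exact: (measurable_funTS (measurable_grid_poly _)).
apply: le_trans (LpI_dist_triangle p_ge1 (measurable_funB mf mh)
  (measurable_funB mh me)) _.
rewrite mulr_natl mulr2n EFinD leeD //; first exact: ltW.
by apply: LpI_dist_le_sup => //; [exact: ltW | exact: measurable_funB].
Qed.

Lemma entropy_number_B1D_le {K B n} : (0 < B)%N -> (B ^ K <= 2 ^ n)%N ->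
  (entropy_number p eta (B1D p eta) n
    <= (2 * (Iratio eta ^+ K / (1 - Iratio eta) + K%:R * (2 / B%:R)))%:E)%E.
Proof.
move=> B0 BK; apply: entropy_number_le; last exact: covered_B1D.
by rewrite mulr_gt0 ?grid_radius_gt0.
Qed.

End GridCover.

Lemma exists_nat_sqrt_half n : exists s, (2 * s * s <= n)%N /\ (n < 2 * s.+1 * s.+1)%N.
Proof.
elim: n => [|n [s [sn ns]]]; first by exists 0%N.
case: (ltnP n.+1 (2 * s.+1 * s.+1)) => n_lt; first by exists s; split => //; apply: leqW.
by exists s.+1; split; nia.
Qed.

(* Uses s <= 2 ^ s, so that s / 4 ^ s <= 2 ^- s <= th ^+ s. *)
Lemma grid_radius_le {R : realType} {q th : R} s :
  0 <= q < 1 -> q <= th -> 2^-1 <= th ->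
  2 * (q ^+ s / (1 - q) + s%:R * (2 / (4 ^ s)%:R)) <= 2 * ((1 - q)^-1 + 2) * th ^+ s.
Proof.
move=> /andP[q0 q1] qth th_ge.
have qs : q ^+ s <= th ^+ s by rewrite lerXn2r ?nnegrE //; lra.
have s_le : (s%:R : R) <= 2 ^+ s by rewrite -natrX ler_nat ltnW // ltn_expl.
have four_s : ((4 ^ s)%:R : R) = 2 ^+ s * 2 ^+ s by rewrite -exprMn natrX -natrM.
have two_s : 0 < (2 : R) ^+ s by rewrite exprn_gt0.
have grid_le : (s%:R : R) * (2 / (4 ^ s)%:R) <= 2 * th ^+ s.
  apply: le_trans (_ : 2 ^+ s * (2 / (4 ^ s)%:R) <= _).
    by rewrite ler_wpM2r // divr_ge0 // ltW // ltr0n expn_gt0.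
  rewrite four_s (_ : 2 ^+ s * (2 / (2 ^+ s * 2 ^+ s)) = 2 * 2^-1 ^+ s); last first.
    by rewrite exprVn; field; rewrite gt_eqF.
  by rewrite ler_wpM2l // lerXn2r ?nnegrE //; lra.
rewrite -mulrA ler_wpM2l // (mulrDl _ 2 (th ^+ s)); apply: lerD => //.
by rewrite mulrC ler_wpM2l // invr_ge0 subr_ge0 ltW.
Qed.

Lemma expr_le_expR_sqrt {R : realType} (th : R) s n :
  0 < th < 1 -> (n < 2 * s.+1 * s.+1)%N ->
  th ^+ s.+1 <= expR (- (- ln th / 2 * Num.sqrt n%:R)).
Proof.
move=> /andP[th0 th1] ns.
have ln_th : ln th < 0 by rewrite ln_lt0 // th0.
have sqrt_n : Num.sqrt (n%:R : R) <= 2 * s.+1%:R.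
  have n_le : (n%:R : R) <= (2 * s.+1%:R) ^+ 2.
    rewrite expr2 -!natrM ler_nat; apply: leq_trans (ltnW ns) _.
    by rewrite leq_mul2l leq_pmull ?orbT.
  by apply: le_trans (ler_wsqrtr n_le) _; rewrite sqrtr_sqr ger0_norm.
rewrite -[th in th ^+ _](lnK (_ : th \in Num.pos)) ?posrE //.
rewrite -expRM_natl ler_expR -subr_ge0.
rewrite (_ : _ - _ = (s.+1%:R - Num.sqrt n%:R / 2) * (- ln th)); last by ring.
by apply: mulr_ge0; lra.
Qed.

Lemma grid_radius_le_expR {R : realType} {q th : R} s n :
  0 <= q -> q <= th -> 2^-1 <= th -> th < 1 -> (n < 2 * s.+1 * s.+1)%N ->
  2 * (q ^+ s / (1 - q) + s%:R * (2 / (4 ^ s)%:R))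
    <= 2 * ((1 - q)^-1 + 2) / th * expR (- (- ln th / 2 * Num.sqrt n%:R)).
Proof.
move=> q0 qth th_half th1 ns.
have th0 : 0 < th by lra.
have q01 : 0 <= q < 1 by rewrite q0; lra.
apply: le_trans (grid_radius_le s q01 qth th_half) _.
set C := (1 - q)^-1 + 2; have C0 : 0 < C by rewrite addr_gt0 ?invr_gt0 ?subr_gt0; lra.
rewrite (_ : 2 * C * th ^+ s = 2 * C / th * th ^+ s.+1); last first.
  by rewrite exprS mulrA divfK // gt_eqF.
by rewrite ler_wpM2l ?expr_le_expR_sqrt ?th0 //; exact/ltW/divr_gt0/th0/mulr_gt0.
Qed.

Theorem corollary4p8 (R : realType) (eta : R) (p : \bar R) :
  0 < eta -> eta < 1 -> (1%:E <= p)%E ->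
  exists C C6 : R, 0 < C /\ 0 < C6 /\
    forall n : nat, (1 <= n)%N ->
      (entropy_number p eta (B1D p eta) n
        <= (C * expR (- (C6 * Num.sqrt (n%:R))))%:E)%E.
Proof.
move=> eta_gt0 eta_lt1 p_ge1.
have q0 := Iratio_gt0 _ eta_gt0 eta_lt1; have q1 := Iratio_lt1 _ eta_gt0.
set q := Iratio eta in q0 q1; pose th := (1 + q) / 2.
have qth : q <= th by rewrite /th; lra.
have th_half : 2^-1 <= th by rewrite /th; lra.
have th_lt1 : th < 1 by rewrite /th; lra.
exists (2 * ((1 - q)^-1 + 2) / th), (- ln th / 2); split; [|split].
- by rewrite divr_gt0 ?mulr_gt0 ?addr_gt0 ?invr_gt0 ?subr_gt0 //; lra.
- suff : ln th < 0 by lra.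
  by apply: ln_lt0; rewrite th_lt1 andbT /th; lra.
move=> n _; have [s [sn ns]] := exists_nat_sqrt_half n.
have B0 : (0 < 4 ^ s)%N by rewrite expn_gt0.
have BK : ((4 ^ s) ^ s <= 2 ^ n)%N.
  by rewrite -expnM (_ : 4 = 2 ^ 2)%N // -expnM leq_exp2l // mulnA.
apply: le_trans (entropy_number_B1D_le eta p eta_gt0 eta_lt1 p_ge1 B0 BK) _.
by rewrite lee_fin grid_radius_le_expR // ltW.
Qed.
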